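(* Let $s\ge2$, $1\le t\le k-1$, $N$ a positive multiple of $s^t$, $\lambda=N/s^t$, and let $p_{\max}$ be a positive integer with $\lambda/s^{k-t}\le p_{\max}\le\lambda$ and $p_{\max}\ne\lambda/s^{k-t}$. Then $G(k,s,t)^{\rm LP}=G_{P_{A'(k,s,t)^{\top}}}$.
   Context: Variables $x_{\mathbf{i}}$ are indexed by $\mathbf{i}=(i_1,\dots,i_k)\in\{0,\dots,s-1\}^k$. The LP relaxation of ILP (OA) is: minimize $\sum_{\mathbf i}x_{\mathbf i}$ subject to, for every $t$-subset $J\subseteq\{1,\dots,k\}$ and every $a\in\{0,\dots,s-1\}^J$, $\sum_{\mathbf i:\ i_j=a_j\ \forall j\in J}x_{\mathbf i}=\lambda$, and $0\le x_{\mathbf i}\le p_{\max}$. With feasible set $\mathcal F$, $G(k,s,t)^{\rm LP}$ is the set of permutations $\pi$ of the index set $\{0,\dots,s-1\}^k$ with $\pi(x)\in\mathcal F$ and equal objective value for all $x\in\mathcal F$, where $\pi(x)_{\mathbf i}=x_{\pi^{-1}(\mathbf i)}$. $A'(k,s,t)$ is the matrix whose rows are the coefficient vectors of the equalities $\sum_{\mathbf i:\ i_j=a_j\ \forall j\in J}x_{\mathbf i}=N/s^q$ for all $q\in\{0,\dots,t\}$, all $q$-subsets $J\subseteq\{1,\dots,k\}$ and all $a\in\{0,\dots,s-2\}^J$ (the case $q=0$ being $\sum_{\mathbf i}x_{\mathbf i}=N$). $P_{A'(k,s,t)^{\top}}$ is the $s^k\times s^k$ orthogonal projection matrix onto the row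 space of $A'(k,s,t)$, and for a square matrix $M$ indexed by $\{0,\dots,s-1\}^k$, $G_M=\{\pi:\Pi M\Pi^{\top}=M\}$ where $\Pi$ is the permutation matrix of $\pi$. *)

From HB Require Import structures.
From mathcomp Require Import all_boot all_order all_algebra.
From mathcomp Require Import fingroup perm.
Set Implicit Arguments. Unset Strict Implicit. Unset Printing Implicit Defensive.
Import Order.TTheory GRing.Theory Num.Theory.
Local Open Scope ring_scope.

Definition Idx (k s : nat) : finType := {ffun 'I_k -> 'I_s}.

Definition agrees k s (J : {set 'I_k}) (a i : Idx k s) : bool :=
  [forall j in J, i j == a j].

Definition permv (R : Type) k s (pi : {perm Idx k s}) (x : {ffun Idx k s -> R})
  : {ffun Idx k s -> R} := [ffun i => x ((pi^-1)%g i)].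

Definition LP_feasible (R : realFieldType) (k s t lambda pmax : nat)
  (x : {ffun Idx k s -> R}) : Prop :=
  (forall (J : {set 'I_k}) (a : Idx k s), #|J| = t ->
     \sum_(i | agrees J a i) x i = lambda%:R) /\
  (forall i, 0 <= x i /\ x i <= pmax%:R).

Definition LP_obj (R : realFieldType) k s (x : {ffun Idx k s -> R}) : R :=
  \sum_i x i.

Definition in_G_LP (R : realFieldType) (k s t lambda pmax : nat)
  (pi : {perm Idx k s}) : Prop :=
  forall x : {ffun Idx k s -> R}, @LP_feasible R k s t lambda pmax x ->
    @LP_feasible R k s t lambda pmax (permv pi x) /\
    LP_obj (permv pi x) = LP_obj x.

(* Rows of A'(k,s,t): pairs (J, a) with #|J| <= t, a_j <= s-2 for j in J;
   a is normalised to 0 outside J so that each (J, a in {0..s-2}^J) occurs once. *)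
Definition rowP k s (t : nat) (p : {set 'I_k} * Idx k s) : bool :=
  [&& (#|p.1| <= t)%N,
      [forall j in p.1, (p.2 j < s.-1)%N] &
      [forall j in ~: p.1, (p.2 j == 0 :> nat)]].

Definition RowIdx k s t : finType := {p : {set 'I_k} * Idx k s | rowP t p}.

Definition nidx k s := #|{: Idx k s}|.

Definition Aprime (R : realFieldType) k s t
  : 'M[R]_(#|{: RowIdx k s t}|, nidx k s) :=
  \matrix_(r, c) (agrees (val (enum_val r)).1 (val (enum_val r)).2
                          (enum_val c))%:R.

(* Orthogonal projection onto the row space of A: projection onto <<A>>
   along its orthogonal complement {u | u A^T = 0} = kermx A^T. *)
Definition orth_proj (R : realFieldType) m n (A : 'M[R]_(m, n)) : 'M[R]_n :=
  proj_mx <<A>>%MS (kermx A^T).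

Definition perm_matrix (R : realFieldType) k s (pi : {perm Idx k s})
  : 'M[R]_(nidx k s) :=
  \matrix_(r, c) (pi (enum_val c) == enum_val r)%:R.

Definition G_M (R : realFieldType) k s (M : 'M[R]_(nidx k s)) : {set {perm Idx k s}} :=
  [set pi | perm_matrix R pi *m M *m (perm_matrix R pi)^T == M].

From Pilot Require Import Defs.
From HB Require Import structures.
From mathcomp Require Import all_boot all_order all_algebra.
From mathcomp Require Import fingroup perm.
From mathcomp Require Import zify lra.
Set Implicit Arguments. Unset Strict Implicit. Unset Printing Implicit Defensive.
Import Order.TTheory GRing.Theory Num.Theory.
Local Open Scope ring_scope.

(* The feasible set of the LP is the box [0, pmax]^(s^k) cut by the affine
   space u + K, where u = lambda / s^(k-t) is the uniform point and K is the
   space of functions all of whose t-marginals vanish; since 0 < u < pmax, u is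
   interior to the box. Hence a permutation preserves the feasible set iff it
   preserves K (the objective is a plain sum, invariant under every
   permutation). The marginals of order <= t with entries <= s-2 determine all
   marginals of order <= t, so K is the kernel of A'^T, i.e. the orthogonal
   complement of the row space of A'. Finally an orthogonal matrix commutes
   with the orthogonal projection onto a subspace iff it preserves its
   orthogonal complement. *)

Lemma mulmx_trmx_self_eq0 (R : realFieldType) m n (Y : 'M[R]_(m, n)) :
  Y *m Y^T = 0 -> Y = 0.
Proof.
move=> YYt0; apply/matrixP => i j; rewrite mxE.
have /eqP := congr1 (fun B : 'M[R]_m => B i i) YYt0; rewrite !mxE.
rewrite psumr_eq0 => [/allP/(_ j (mem_index_enum j))|l _]; last first.
  by rewrite mxE -expr2 sqr_ge0.
by rewrite mxE -expr2 sqrf_eq0 => /eqP.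
Qed.

Lemma proj_mx_comm (F : fieldType) n (U V Q : 'M[F]_n) :
  (U :&: V = 0)%MS -> row_full (U + V)%MS ->
  (U *m Q <= U)%MS -> (V *m Q <= V)%MS -> Q *m proj_mx U V = proj_mx U V *m Q.
Proof.
move=> dxUV fullUV UQ VQ; set M := proj_mx U V.
have MQ_sub : (M *m Q <= U)%MS.
  by rewrite (submx_trans _ UQ) // submxMr // -[M]mul1mx proj_mx_sub.
have compl_sub : ((1%:M - M) *m Q <= V)%MS.
  rewrite (submx_trans _ VQ) // submxMr //.
  by have := proj_mx_compl_sub (submx_full 1%:M fullUV); rewrite mul1mx.
rewrite -{1}[Q]mul1mx -[1%:M](subrK M) mulmxDl mulmxDl.
by rewrite proj_mx_0 // add0r proj_mx_id.
Qed.

Section OrthogonalProjection.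
Variables (R : realFieldType) (m n : nat) (A : 'M[R]_(m, n)).
Local Notation W := <<A>>%MS.
Local Notation K := (kermx A^T).
Local Notation M := (orth_proj A).

Lemma orth_genmx_kermx p q (Z : 'M[R]_(p, n)) (Y : 'M[R]_(q, n)) :
  (Z <= W)%MS -> (Y <= K)%MS -> Z *m Y^T = 0.
Proof.
rewrite genmxE => /submxP[D ->] /sub_kermxP AYt0.
by rewrite -mulmxA -[A *m Y^T]trmxK trmx_mul trmxK AYt0 trmx0 mulmx0.
Qed.

Lemma capmx_genmx_kermx : (W :&: K = 0)%MS.
Proof.
by apply: mulmx_trmx_self_eq0; apply: orth_genmx_kermx; [exact: capmxSl | exact: capmxSr].
Qed.

Lemma row_full_genmx_kermx : row_full (W + K)%MS.
Proof.
rewrite /row_full mxrank_disjoint_sum ?capmx_genmx_kermx //.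
by rewrite mxrank_gen mxrank_ker mxrank_tr subnKC ?rank_leq_col.
Qed.

Lemma orth_proj_eq0 p (X : 'M[R]_(p, n)) : (X *m M == 0) = (X <= K)%MS.
Proof.
apply/eqP/idP => [XM0|XK]; last exact: proj_mx_0 capmx_genmx_kermx XK.
have := proj_mx_compl_sub (submx_full X row_full_genmx_kermx).
by rewrite /orth_proj in XM0 *; rewrite XM0 subr0.
Qed.

Lemma orth_kermx_sub_genmx p (X : 'M[R]_(p, n)) : X *m K^T = 0 -> (X <= W)%MS.
Proof.
move=> XKt0; set Y := X - X *m M.
have YK : (Y <= K)%MS.
  by apply: proj_mx_compl_sub; apply: submx_full row_full_genmx_kermx.
suff /eqP : Y = 0 by rewrite subr_eq0 => /eqP ->; apply: proj_mx_sub.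
apply: mulmx_trmx_self_eq0; rewrite mulmxBl (orth_genmx_kermx (proj_mx_sub _ _ _) YK).
have [D ->] := submxP YK.
by rewrite subr0 trmx_mul mulmxA XKt0 mul0mx.
Qed.

Variable Q : 'M[R]_n.
Hypotheses (QQt : Q *m Q^T = 1%:M) (QtQ : Q^T *m Q = 1%:M).

Lemma orth_proj_conj : (Q^T *m M *m Q == M) = (K *m Q <= K)%MS.
Proof.
apply/eqP/idP => [QMQ|KQ].
  have QM : Q *m M = M *m Q by rewrite -{1}QMQ !mulmxA QQt mul1mx.
  have KM0 : K *m M = 0 by apply/eqP; rewrite orth_proj_eq0.
  by rewrite -orth_proj_eq0 -mulmxA QM mulmxA KM0 mul0mx.
have KQt : (K *m Q^T <= K)%MS.
  have rkKQ : \rank (K *m Q) = \rank K.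
    by apply: mxrankMfree; rewrite row_free_unit; case: (mulmx1_unit QQt).
  have KKQ : (K <= K *m Q)%MS by have := mxrank_leqif_sup KQ; rewrite rkKQ => /leqif_refl.
  by have := submxMr Q^T KKQ; rewrite -mulmxA QQt mulmx1.
have WQt : (W *m Q^T <= W)%MS.
  apply: orth_kermx_sub_genmx; have [D DK] := submxP KQ.
  rewrite -mulmxA -trmx_mul DK trmx_mul mulmxA.
  by rewrite (orth_genmx_kermx (submx_refl W) (submx_refl K)) mul0mx.
rewrite /orth_proj (proj_mx_comm capmx_genmx_kermx row_full_genmx_kermx WQt KQt).
by rewrite -mulmxA QtQ mulmx1.
Qed.

End OrthogonalProjection.

Section Marginals.
Variables (R : realFieldType) (k s : nat).
Implicit Types (F G : Idx k s -> R) (J : {set 'I_k}) (a b i : Idx k s).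

Definition marginal F J a : R := \sum_(i | agrees J a i) F i.

Definition idx_upd a (j : 'I_k) (c : 'I_s) : Idx k s :=
  [ffun l => if l == j then c else a l].

Lemma eq_agrees J a b i : {in J, a =1 b} -> agrees J a i = agrees J b i.
Proof.
by move=> eq_ab; apply: eq_forallb_in => l lJ; rewrite eq_ab.
Qed.

Lemma agreesT a i : agrees setT a i = (i == a).
Proof.
apply/forall_inP/eqP => [agr | -> l _ //]; apply/ffunP => l; exact/eqP/agr.
Qed.

Lemma agrees_setU1 J a j i : agrees (j |: J) a i = (i j == a j) && agrees J a i.
Proof.
apply/forall_inP/andP => [agr | [/eqP ij /forall_inP agr] l].
  by split; [exact/agr/setU11 | apply/forall_inP => l lJ; apply/agr/setU1r].
by case/setU1P => [-> | /agr]; first exact/eqP.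
Qed.

Lemma marginal_split F J a j : j \notin J ->
  marginal F J a = \sum_c marginal F (j |: J) (idx_upd a j c).
Proof.
move=> jNJ; rewrite /marginal (partition_big (fun i => i j) predT) //=.
apply: eq_bigr => c _; apply: eq_bigl => i.
rewrite agrees_setU1 ffunE eqxx andbC (@eq_agrees _ _ a) // => l lJ.
by rewrite ffunE; case: eqP => // lj; rewrite -lj lJ in jNJ.
Qed.

Lemma marginalB F G J a :
  marginal (fun i => F i - G i) J a = marginal F J a - marginal G J a.
Proof. by rewrite /marginal sumrB. Qed.

Lemma marginalZ (e : R) F J a : marginal (fun i => e * F i) J a = e * marginal F J a.
Proof. by rewrite /marginal mulr_sumr. Qed.

Lemma marginal1 J a : marginal (fun=> 1) J a = (s ^ #|~: J|)%:R.
Proof.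
move en : #|~: J| => n; elim: n J a en => [|n IHn] J a.
  move/eqP; rewrite cards_eq0 => /eqP JC0.
  rewrite -[J]setCK JC0 setC0 expn0 /marginal (eq_bigl _ _ (agreesT a)).
  by rewrite big_pred1_eq.
move=> JCn; have /card_gt0P[j] : (0 < #|~: J|)%N by rewrite JCn.
rewrite inE => jNJ; rewrite (marginal_split _ _ jNJ).
have JCj : #|~: (j |: J)| = n.
  by have := cardsC J; have := cardsC (j |: J); rewrite cardsU1 jNJ card_ord; lia.
under eq_bigr do rewrite IHn //.
by rewrite sumr_const card_ord -mulrnA -expnSr.
Qed.

Lemma marginal_const (e : R) J a : marginal (fun=> e) J a = e * (s ^ #|~: J|)%:R.
Proof. by rewrite -(marginal1 J a) -marginalZ; apply: eq_bigr => i _; rewrite mulr1. Qed.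

End Marginals.

Definition marginals_vanish (R : realFieldType) k s (t : nat) (F : Idx k s -> R) :=
  forall (J : {set 'I_k}) (a : Idx k s), #|J| = t -> marginal F J a = 0.

Section VanishingMarginals.
Variables (R : realFieldType) (k s t : nat).
Implicit Types (F G : Idx k s -> R) (J : {set 'I_k}) (a i : Idx k s).

Lemma eq_marginals_vanish F G :
  F =1 G -> marginals_vanish t F -> marginals_vanish t G.
Proof.
by move=> eqFG F0 J a Jt; rewrite -(F0 J a Jt); apply: eq_bigr => i _; rewrite eqFG.
Qed.

Lemma marginals_vanish_le F : (t <= k)%N -> marginals_vanish t F ->
  forall J a, (#|J| <= t)%N -> marginal F J a = 0.
Proof.
move=> t_le_k F0 J a; move en : (t - #|J|)%N => n; elim: n J a en => [|n IHn] J a.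
  by move=> tJ Jt; apply: F0; lia.
move=> tJn _; have /card_gt0P[j] : (0 < #|~: J|)%N.
  by have := cardsC J; rewrite card_ord; lia.
rewrite inE => jNJ; rewrite (marginal_split _ _ jNJ) big1 // => c _.
by apply: IHn; rewrite cardsU1 jNJ; lia.
Qed.

Definition top_coords J a := [set l in J | a l == s.-1 :> nat].

Lemma top_coordsD1 J a j : top_coords (J :\ j) a = top_coords J a :\ j.
Proof. by apply/setP => l; rewrite !inE andbA. Qed.

Lemma top_coords_upd J a j c : j \in top_coords J a -> c != a j ->
  top_coords J (idx_upd a j c) = top_coords J a :\ j.
Proof.
rewrite inE => /andP[_ /eqP ajs] cNaj; apply/setP => l; rewrite !inE ffunE.
case: (l =P j) => [-> | _]; rewrite ?andbT ?andbF // -ajs.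
by move: cNaj; rewrite -val_eqE => /negbTE ->; rewrite andbF.
Qed.

Lemma idx_upd_id a j : idx_upd a j (a j) = a.
Proof. by apply/ffunP => l; rewrite ffunE; case: eqP => // ->. Qed.

Hypothesis s_gt0 : (0 < s)%N.

Definition idx_restrict J a : Idx k s :=
  [ffun l => if l \in J then a l else Ordinal s_gt0].

Lemma rowP_idx_restrict J a : (#|J| <= t)%N -> top_coords J a = set0 ->
  Defs.rowP t (J, idx_restrict J a).
Proof.
move=> tJ top0; rewrite /Defs.rowP /= tJ /=.
apply/andP; split; apply/forall_inP => l lJ.
  have : l \notin top_coords J a by rewrite top0 inE.
  rewrite /idx_restrict ffunE lJ inE lJ /= ltn_neqAle => ->.
  by rewrite -ltnS prednK //= ltn_ord.
by rewrite /idx_restrict ffunE (negbTE (_ : l \notin J)) -?in_setC.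
Qed.

Lemma row_marginals_vanish F :
  (forall p : RowIdx k s t, marginal F (val p).1 (val p).2 = 0) ->
  forall J a, (#|J| <= t)%N -> marginal F J a = 0.
Proof.
(* Induction on the number of coordinates of [J] where [a] is [s-1]: splitting
   along such a coordinate [j] expresses the marginal at [a] through the one on
   [J :\ j] and those at [idx_upd a j c], [c != a j], which all have one such
   coordinate fewer. *)
move=> F0 J a tJ; move en : #|top_coords J a| => n.
elim: n J a tJ en => [|n IHn] J a tJ.
  move/eqP; rewrite cards_eq0 => /eqP top0.
  rewrite -(F0 (Sub (J, idx_restrict J a) (rowP_idx_restrict tJ top0))) /=.
  by apply: eq_bigl => i; apply: eq_agrees => l lJ; rewrite ffunE lJ.
move=> topn; have /card_gt0P[j jtop] : (0 < #|top_coords J a|)%N by rewrite topn.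
have jJ : j \in J by move: jtop; rewrite inE => /andP[].
have topj : #|top_coords J a :\ j| = n by move: topn; rewrite (cardsD1 j) jtop; lia.
have jNJj : j \notin J :\ j by rewrite setD11.
have := marginal_split F a jNJj; rewrite setD1K // (bigD1 (a j)) //= idx_upd_id.
rewrite IHn ?top_coordsD1 //; last first.
  by apply: leq_trans tJ; apply/subset_leq_card/subsetDl.
rewrite big1 ?addr0 => [<- // | c cNaj].
by apply: IHn; rewrite ?top_coords_upd.
Qed.

End VanishingMarginals.

Section CoefficientMatrix.
Variables (R : realFieldType) (k s t : nat).
Local Notation A := (Aprime R k s t).

Definition idx_fun (v : 'rV[R]_(nidx k s)) (i : Idx k s) : R := v 0 (enum_rank i).

Lemma idx_fun_row (F : Idx k s -> R) : idx_fun (\row_c F (enum_val c)) =1 F.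
Proof. by move=> i; rewrite /idx_fun mxE enum_rankK. Qed.

Lemma mul_Aprime_tr v r :
  (v *m A^T) 0 r = marginal (idx_fun v) (val (enum_val r)).1 (val (enum_val r)).2.
Proof.
rewrite mxE /marginal (reindex (@enum_val (Idx k s) predT)) /=; last first.
  exact/onW_bij/enum_val_bij.
rewrite [RHS]big_mkcond; apply: eq_bigr => c _; rewrite !mxE /idx_fun enum_valK.
by case: agrees; rewrite ?mulr1 ?mulr0.
Qed.

Lemma sub_kermx_Aprime v : (t <= k)%N -> (0 < s)%N ->
  (v <= kermx A^T)%MS <-> marginals_vanish t (idx_fun v).
Proof.
move=> t_le_k s_gt0; rewrite sub_kermx; split => [/eqP vA0 | v0].
  move=> J a Jt; apply: (row_marginals_vanish (t := t) s_gt0); rewrite ?Jt // => p.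
  have := congr1 (fun B : 'M[R]_(1, _) => B 0 (enum_rank p)) vA0.
  by rewrite mul_Aprime_tr enum_rankK mxE.
apply/eqP/rowP => r; rewrite mul_Aprime_tr mxE (marginals_vanish_le t_le_k v0) //.
by have /and3P[] := valP (enum_val r).
Qed.

End CoefficientMatrix.

Section PermutationMatrix.
Variables (R : realFieldType) (k s : nat) (pi : {perm Idx k s}).

Definition rank_perm : 'S_(nidx k s) :=
  perm (inj_comp (@enum_rank_inj _) (inj_comp (@perm_inj _ pi) (@enum_val_inj _ _))).

Lemma perm_matrixE : perm_matrix R pi = perm_mx rank_perm^-1.
Proof.
apply/matrixP => r c; rewrite !mxE; congr (_%:R).
rewrite -(inj_eq (@perm_inj _ rank_perm)) permKV permE /= eq_sym.
by rewrite -(inj_eq (@enum_val_inj _ _)) enum_rankK.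
Qed.

Lemma perm_matrix_trmxE : (perm_matrix R pi)^T = perm_mx rank_perm.
Proof. by rewrite perm_matrixE tr_perm_mx invgK. Qed.

Lemma perm_matrix_tr_mul : perm_matrix R pi *m (perm_matrix R pi)^T = 1%:M.
Proof. by rewrite perm_matrix_trmxE perm_matrixE -perm_mxM mulVg perm_mx1. Qed.

Lemma perm_matrix_mul_tr : (perm_matrix R pi)^T *m perm_matrix R pi = 1%:M.
Proof. by rewrite perm_matrix_trmxE perm_matrixE -perm_mxM mulgV perm_mx1. Qed.

Lemma idx_fun_mul_perm_matrix_tr v :
  idx_fun (v *m (perm_matrix R pi)^T) =1 fun i => idx_fun v ((pi^-1)%g i).
Proof.
move=> i; rewrite perm_matrix_trmxE -[rank_perm]invgK -col_permE /idx_fun mxE.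
congr (v 0 _); apply: (@perm_inj _ rank_perm); rewrite permKV permE /=.
by rewrite enum_rankK permKV.
Qed.

End PermutationMatrix.

Definition perm_stable_vanishing (R : realFieldType) k s t (pi : {perm Idx k s}) :=
  forall F : Idx k s -> R,
    marginals_vanish t F -> marginals_vanish t (fun i => F ((pi^-1)%g i)).

Lemma G_M_orth_proj_Aprime (R : realFieldType) k s t (pi : {perm Idx k s}) :
  (t <= k)%N -> (0 < s)%N ->
  pi \in G_M (orth_proj (Aprime R k s t)) <-> perm_stable_vanishing R t pi.
Proof.
move=> t_le_k s_gt0; rewrite inE -{1}(trmxK (perm_matrix R pi)).
rewrite orth_proj_conj ?trmxK ?perm_matrix_tr_mul ?perm_matrix_mul_tr //.
have kerE v := sub_kermx_Aprime v t_le_k s_gt0.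
split => [KP F F0 | P_stable].
  have vK : (\row_c F (enum_val c) <= kermx (Aprime R k s t)^T)%MS.
    by apply/kerE; apply: eq_marginals_vanish F0 => i; rewrite idx_fun_row.
  have /kerE := submx_trans (submxMr (perm_matrix R pi)^T vK) KP.
  by apply: eq_marginals_vanish => i; rewrite idx_fun_mul_perm_matrix_tr idx_fun_row.
apply/row_subP => i; rewrite row_mul; apply/kerE.
apply: eq_marginals_vanish (P_stable _ _) => [j|].
  by rewrite idx_fun_mul_perm_matrix_tr.
exact/kerE/row_sub.
Qed.

Lemma LP_obj_permv (R : realFieldType) k s (pi : {perm Idx k s}) (x : {ffun Idx k s -> R}) :
  LP_obj (permv pi x) = LP_obj x.
Proof.
rewrite /LP_obj (reindex_inj (@perm_inj _ pi)) /=.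
by apply: eq_bigr => i _; rewrite ffunE permK.
Qed.

Section LPRelaxation.
Variables (R : realFieldType) (k s t lambda pmax : nat) (u : R).
Hypotheses (u_mul : u * (s ^ (k - t))%:R = lambda%:R).
Hypotheses (u_gt0 : 0 < u) (u_lt_pmax : u < pmax%:R).

Lemma marginal_uniform (J : {set 'I_k}) (a : Idx k s) :
  #|J| = t -> marginal (fun=> u) J a = lambda%:R.
Proof.
move=> Jt; rewrite marginal_const -u_mul; congr (_ * (_ ^ _)%:R).
by have := cardsC J; rewrite card_ord Jt; lia.
Qed.

Lemma marginal_eqs_vanish (x : Idx k s -> R) :
  (forall (J : {set 'I_k}) (a : Idx k s), #|J| = t -> marginal x J a = lambda%:R) <->
  marginals_vanish t (fun i => x i - u).
Proof.
split => [x_eqs J a Jt | x0 J a Jt].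
  by rewrite (marginalB x (fun=> u)) x_eqs // marginal_uniform // subrr.
apply/eqP; rewrite -subr_eq0 -(marginal_uniform a Jt) -(marginalB x (fun=> u)).
by rewrite x0.
Qed.

Lemma perturbation_feasible (F : Idx k s -> R) : marginals_vanish t F ->
  exists2 e : R, 0 < e & LP_feasible t lambda pmax [ffun i => u + e * F i].
Proof.
move=> F0; set B : R := \sum_i `|F i|; set del : R := Num.min u (pmax%:R - u).
have del_gt0 : 0 < del by rewrite lt_min u_gt0 subr_gt0 u_lt_pmax.
have B1_gt0 : 0 < 1 + B by rewrite ltr_wpDr ?sumr_ge0.
exists (del / (1 + B)); first by rewrite divr_gt0.
have eF_le i : `|del / (1 + B) * F i| <= del.
  have e_ge0 : 0 <= del / (1 + B) by rewrite divr_ge0 ?ltW.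
  rewrite normrM ger0_norm // mulrAC ler_pdivrMr //.
  apply: ler_wpM2l; first exact: ltW.
  by rewrite /B (bigD1 i) //= addrCA lerDl addr_ge0 ?sumr_ge0.
split=> [J a Jt | i].
  apply: (proj2 (marginal_eqs_vanish _)) Jt.
  apply: (@eq_marginals_vanish _ _ _ _ (fun i => del / (1 + B) * F i)).
    by move=> i; rewrite ffunE addrAC subrr add0r.
  by move=> {}J {}a {}Jt; rewrite marginalZ F0 ?mulr0.
have := eF_le i; rewrite ffunE ler_norml => /andP[lo hi].
have : del <= u by rewrite ge_min lexx.
have : del <= pmax%:R - u by rewrite ge_min lexx orbT.
split; lra.
Qed.

Lemma in_G_LP_stable (pi : {perm Idx k s}) :
  @in_G_LP R k s t lambda pmax pi <-> perm_stable_vanishing R t pi.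
Proof.
split => [G_pi F F0 | P_stable x [x_eqs x_bnd]].
  have [e e_gt0 x_feas] := perturbation_feasible F0.
  have [[/marginal_eqs_vanish px0 _] _] := G_pi _ x_feas.
  move=> J a Jt; apply: (mulfI (lt0r_neq0 e_gt0)); rewrite mulr0 -marginalZ.
  by rewrite -(px0 J a Jt); apply: eq_bigr => i _; rewrite !ffunE addrAC subrr add0r.
split; last exact: LP_obj_permv.
split=> [|i]; last by rewrite ffunE.
apply/marginal_eqs_vanish.
apply: eq_marginals_vanish (P_stable _ (proj1 (marginal_eqs_vanish x) x_eqs)).
by move=> i; rewrite ffunE.
Qed.

End LPRelaxation.

Theorem theorem7 (R : realFieldType) (k s t N pmax : nat) :
  (2 <= s)%N -> (1 <= t)%N -> (t <= k.-1)%N ->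
  (0 < N)%N -> (s ^ t %| N)%N ->
  let lambda := (N %/ s ^ t)%N in
  (0 < pmax)%N ->
  (lambda%:R / (s ^ (k - t))%:R <= pmax%:R :> R) -> (pmax <= lambda)%N ->
  (pmax%:R != lambda%:R / (s ^ (k - t))%:R :> R) ->
  forall pi : {perm Idx k s},
    @in_G_LP R k s t lambda pmax pi <-> pi \in G_M (orth_proj (Aprime R k s t)).
Proof.
move=> s_ge2 _ t_lt_k N_gt0 st_dvdN lambda _ u_le_pmax _ pmax_neq_u pi.
have t_le_k : (t <= k)%N by apply: leq_trans t_lt_k (leq_pred k).
have s_gt0 : (0 < s)%N := ltnW s_ge2.
have sX_neq0 : (s ^ (k - t))%:R != 0 :> R by rewrite pnatr_eq0 -lt0n expn_gt0 s_gt0.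
have lambda_gt0 : (0 < lambda)%N by rewrite divn_gt0 ?expn_gt0 ?s_gt0 // dvdn_leq.
apply: (iff_trans (in_G_LP_stable (u := lambda%:R / (s ^ (k - t))%:R) _ _ _ pi)).
- by rewrite mulfVK.
- by rewrite divr_gt0 ?ltr0n ?expn_gt0 ?s_gt0.
- by rewrite lt_neqAle eq_sym pmax_neq_u.
- by apply: iff_sym; apply: G_M_orth_proj_Aprime.
Qed.
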